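(* Let $p_{kl}=(p^1_{kl},p^2_{kl})$ and $c_{kl}=(c^1_{kl},c^2_{kl})$ be two parallel nets in the plane $\mathbb{R}^2$ with the same index set. They are Christoffel dual if and only if there is a collection of real numbers $h_{kl}$ such that for any adjacent vertices $c_{kl}$ and $c_{k'l'}$, $$h_{kl}-h_{k'l'}=(c^1_{kl}-c^1_{k'l'})\,p^2_{kl}-(c^2_{kl}-c^2_{k'l'})\,p^1_{kl}.$$
   Context: Here a (planar) net is a collection of points indexed by $(k,l)$ with $0\le k\le a$, $0\le l\le b$, whose faces are the (labeled, not necessarily convex) quadrilaterals $(k,l),(k+1,l),(k+1,l+1),(k,l+1)$; vertices are adjacent if their indices differ by $1$ in exactly one coordinate, and edges join adjacent vertices. Two nets are parallel if corresponding edges are parallel. Two labeled quadrilaterals $ABCD$ and $A'B'C'D'$ are dual if $AB\parallel A'B'$, $BC\parallel B'C'$, $CD\parallel C'D'$, $DA\parallel D'A'$, $AC\parallel B'D'$, $BD\parallel A'C'$. Two nets are Christoffel dual if their corresponding faces are dual. *)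

From mathcomp Require Import all_boot all_order all_algebra.
From mathcomp Require Import reals.
Set Implicit Arguments. Unset Strict Implicit. Unset Printing Implicit Defensive.
Import Order.TTheory GRing.Theory Num.Theory.
Local Open Scope ring_scope.

Definition vsub (R : numDomainType) (u v : R * R) : R * R := (u.1 - v.1, u.2 - v.2).

Definition par (R : numDomainType) (u v : R * R) : Prop := u.1 * v.2 - u.2 * v.1 = 0.

(* A net with index set {0..a} x {0..b} is a map nat -> nat -> R*R
   (only values at indices k <= a, l <= b matter). *)
Definition net (R : Type) := nat -> nat -> R * R.

Definition adjacent (a b k l k' l' : nat) : Prop :=
  [/\ (k <= a)%N, (l <= b)%N, (k' <= a)%N, (l' <= b)%N &
   ((k' = k.+1 /\ l' = l) \/ (k = k'.+1 /\ l = l') \/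
    (k' = k /\ l' = l.+1) \/ (k' = k /\ l = l'.+1))].

Definition parallel_nets (R : numDomainType) (a b : nat) (p c : net R) : Prop :=
  forall k l k' l', adjacent a b k l k' l' ->
    par (vsub (p k' l') (p k l)) (vsub (c k' l') (c k l)).

Definition dual_quads (R : numDomainType) (A B C D A' B' C' D' : R * R) : Prop :=
  [/\ par (vsub B A) (vsub B' A'), par (vsub C B) (vsub C' B'),
      par (vsub D C) (vsub D' C') & par (vsub A D) (vsub A' D')] /\
  (par (vsub C A) (vsub D' B') /\ par (vsub D B) (vsub C' A')).

Definition christoffel_dual (R : numDomainType) (a b : nat) (p c : net R) : Prop :=
  forall k l, (k < a)%N -> (l < b)%N ->
    dual_quads (p k l) (p k.+1 l) (p k.+1 l.+1) (p k l.+1)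
               (c k l) (c k.+1 l) (c k.+1 l.+1) (c k l.+1).

(* The edge form w(x, y) = (c_x - c_y) x p_x (planar cross product) is antisymmetric
   on every edge because corresponding edges of p and c are parallel.  Modulo the edge
   conditions, the circulation of w around a face is, up to sign, the cross product of
   either pair of dual diagonals, so the nets are Christoffel dual exactly when w is
   closed.  On the grid a closed antisymmetric edge form is exact (a discrete Poincare
   lemma): integrate it along the first row and then up the columns. *)
From mathcomp Require Import all_boot all_order all_algebra.
From mathcomp Require Import reals.
From mathcomp Require Import ring.
Set Implicit Arguments.
Unset Strict Implicit.
Unset Printing Implicit Defensive.

Import Order.TTheory GRing.Theory Num.Theory.
Local Open Scope ring_scope.

Definition cross (R : numDomainType) (u v : R * R) : R := u.1 * v.2 - u.2 * v.1.

Lemma dual_quadsE (R : numDomainType) (A B C D A' B' C' D' : R * R) :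
  par (vsub B A) (vsub B' A') -> par (vsub C B) (vsub C' B') ->
  par (vsub D C) (vsub D' C') -> par (vsub A D) (vsub A' D') ->
  dual_quads A B C D A' B' C' D' <->
  cross (vsub A' B') A + cross (vsub B' C') B + cross (vsub C' D') C
    + cross (vsub D' A') D = 0.
Proof.
rewrite /dual_quads /par -!/(cross _ _) => parAB parBC parCD parDA.
set S := (X in _ <-> X = 0).
have diag1E : cross (vsub C A) (vsub D' B') =
              S + cross (vsub C B) (vsub C' B') + cross (vsub A D) (vsub A' D').
  by rewrite /S /cross /=; ring.
have diag2E : cross (vsub D B) (vsub C' A') =
              - S - cross (vsub B A) (vsub B' A') - cross (vsub D C) (vsub D' C').
  by rewrite /S /cross /=; ring.
rewrite diag1E diag2E parAB parBC parCD parDA !subr0 !addr0.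
by split=> [[_ []] // | ->]; rewrite oppr0.
Qed.

Lemma adjacent_sym a b k l k' l' :
  adjacent a b k l k' l' -> adjacent a b k' l' k l.
Proof.
by case=> ? ? ? ? [[? ?]|[[? ?]|[[? ?]|[? ?]]]]; subst; split=> //; intuition.
Qed.

Lemma adjacent_right a b k l :
  (k < a)%N -> (l <= b)%N -> adjacent a b k l k.+1 l.
Proof. by move=> ka lb; split=> //; [exact: ltnW | left]. Qed.

Lemma adjacent_up a b k l :
  (k <= a)%N -> (l < b)%N -> adjacent a b k l k l.+1.
Proof. by move=> ka lb; split=> //; [exact: ltnW | right; right; left]. Qed.

Definition closed_form (V : zmodType) (a b : nat) (w : nat -> nat -> nat -> nat -> V) :=
  forall k l, (k < a)%N -> (l < b)%N ->
    w k l k.+1 l + w k.+1 l k.+1 l.+1 + w k.+1 l.+1 k l.+1 + w k l.+1 k l = 0.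

Definition exact_form (V : zmodType) (a b : nat) (w : nat -> nat -> nat -> nat -> V) :=
  exists h : nat -> nat -> V,
    forall k l k' l', adjacent a b k l k' l' -> h k l - h k' l' = w k l k' l'.

Lemma exact_form_closed (V : zmodType) a b (w : nat -> nat -> nat -> nat -> V) :
  exact_form a b w -> closed_form a b w.
Proof.
move=> [h hw] k l ka lb.
rewrite -(hw _ _ _ _ (adjacent_right ka (ltnW lb))) -(hw _ _ _ _ (adjacent_up ka lb)).
rewrite -(hw _ _ _ _ (adjacent_sym (adjacent_right ka lb))).
rewrite -(hw _ _ _ _ (adjacent_sym (adjacent_up (ltnW ka) lb))).
by rewrite !addrA !subrK subrr.
Qed.

Section DiscretePoincare.
Variables (V : zmodType) (a b : nat) (w : nat -> nat -> nat -> nat -> V).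
Hypothesis w_antisym :
  forall k l k' l', adjacent a b k l k' l' -> w k' l' k l = - w k l k' l'.
Hypothesis w_closed : closed_form a b w.

Fixpoint row_potential k : V :=
  if k is k'.+1 then row_potential k' - w k' 0 k 0 else 0.

Fixpoint potential k l : V :=
  if l is l'.+1 then potential k l' - w k l' k l else row_potential k.

Lemma potential_up k l : potential k l - potential k l.+1 = w k l k l.+1.
Proof. by rewrite /= opprB addrC subrK. Qed.

Lemma potential_right k l : (k < a)%N -> (l <= b)%N ->
  potential k l - potential k.+1 l = w k l k.+1 l.
Proof.
move=> ka; elim: l => [|l IHl] lb; first by rewrite /= opprB addrC subrK.
have := w_closed ka lb.
rewrite (w_antisym (adjacent_right ka lb)) (w_antisym (adjacent_up (ltnW ka) lb)).
move/eqP; rewrite addrAC subr_eq0 => /eqP <-.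
rewrite /= opprB [_ - potential _ _]addrC addrACA IHl ?(ltnW lb) //.
by rewrite [- _ + _]addrC addrA.
Qed.

Lemma closed_form_exact : exact_form a b w.
Proof.
exists potential => k l k' l' adj.
case: (adj) => ? ? ? ? [[? ?]|[[? ?]|[[? ?]|[? ?]]]]; subst.
- exact: potential_right.
- by rewrite (w_antisym (adjacent_sym adj)) -potential_right // opprB.
- exact: potential_up.
- by rewrite (w_antisym (adjacent_sym adj)) -potential_up opprB.
Qed.

End DiscretePoincare.

Definition edge_form (R : numDomainType) (p c : net R) k l k' l' : R :=
  cross (vsub (c k l) (c k' l')) (p k l).

Section ParallelNets.
Variables (R : numDomainType) (a b : nat) (p c : net R).
Hypothesis pc_parallel : parallel_nets a b p c.

Lemma edge_form_antisym k l k' l' : adjacent a b k l k' l' ->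
  edge_form p c k' l' k l = - edge_form p c k l k' l'.
Proof.
move=> /pc_parallel; rewrite /par -/(cross _ _) => edge_par.
by rewrite -[RHS]subr0 -edge_par /edge_form /cross /=; ring.
Qed.

Lemma christoffel_dualE :
  christoffel_dual a b p c <-> closed_form a b (edge_form p c).
Proof.
have face_dualE k l : (k < a)%N -> (l < b)%N ->
    dual_quads (p k l) (p k.+1 l) (p k.+1 l.+1) (p k l.+1)
               (c k l) (c k.+1 l) (c k.+1 l.+1) (c k l.+1) <->
    edge_form p c k l k.+1 l + edge_form p c k.+1 l k.+1 l.+1
      + edge_form p c k.+1 l.+1 k l.+1 + edge_form p c k l.+1 k l = 0.
  move=> ka lb; apply: dual_quadsE; apply: pc_parallel.
  - exact: adjacent_right ka (ltnW lb).
  - exact: adjacent_up ka lb.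
  - exact: adjacent_sym (adjacent_right ka lb).
  - exact: adjacent_sym (adjacent_up (ltnW ka) lb).
by split=> dual k l ka lb; apply/(face_dualE k l ka lb)/dual.
Qed.

End ParallelNets.

Theorem lemma7 (R : realType) (a b : nat) (p c : net R) :
  parallel_nets a b p c ->
  (christoffel_dual a b p c <->
   exists h : nat -> nat -> R,
     forall k l k' l', adjacent a b k l k' l' ->
       h k l - h k' l' =
       ((c k l).1 - (c k' l').1) * (p k l).2 - ((c k l).2 - (c k' l').2) * (p k l).1).
Proof.
move=> pc_parallel; rewrite christoffel_dualE //; split.
- exact/closed_form_exact/edge_form_antisym.
- exact: exact_form_closed.
Qed.
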